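(* Let $K$ be a field, $w(x)\in K[x]$ with $d=\deg w\ge2$, $\phi$ the $K$-algebra endomorphism of $K[x]$ with $\phi(x)=w(x)$, and $\delta=\mathrm{id}-\phi$. Let $W=K[w(x)]$ and $U$ the $K$-subspace spanned by $x^m$ for positive integers $m$ not divisible by $d$; for $f\in K[x]$ write uniquely $f=f_1+f_2$ with $f_1\in U$, $f_2\in W$, and set $\ell(f)=\deg f_1$ if $f_1\ne0$, $\ell(f)=0$ otherwise. Then for every nonzero $f\in\operatorname{Im}\delta$: 1) if $f\in W$, say $f(x)=\tilde f(w(x))$ with $\tilde f\in K[x]$, then $\tilde f\in\operatorname{Im}\delta$; 2) if $f\notin W$, then $\deg f\ge d\,\ell(f)\ge d$.
   Context: $\mathrm{id}$ is the identity map of $K[x]$. *)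

From HB Require Import structures.
From mathcomp Require Import all_boot all_order all_algebra.
Set Implicit Arguments. Unset Strict Implicit. Unset Printing Implicit Defensive.
Import GRing.Theory.
Local Open Scope ring_scope.

(* degree of a polynomial (deg 0 := 0) *)
Definition pdeg (K : fieldType) (p : {poly K}) : nat := (size p).-1.

Definition phi (K : fieldType) (w : {poly K}) (f : {poly K}) : {poly K} := f \Po w.

Definition delta (K : fieldType) (w : {poly K}) (f : {poly K}) : {poly K} :=
  f - phi w f.

Definition in_Im_delta (K : fieldType) (w f : {poly K}) : Prop :=
  exists g : {poly K}, f = delta w g.

Definition in_W (K : fieldType) (w f : {poly K}) : Prop :=
  exists h : {poly K}, f = h \Po w.

(* f in U = span{x^m : m > 0, ~ d | m} with d = deg w; i.e. every coefficient
   of index divisible by d (including index 0) vanishes *)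
Definition in_U (K : fieldType) (w f : {poly K}) : Prop :=
  forall i : nat, (pdeg w %| i)%N -> f`_i = 0.

(* ell applied to the U-component f1 of f : deg f1 if f1 <> 0, else 0 *)
Definition ell_of (K : fieldType) (f1 : {poly K}) : nat :=
  if f1 == 0 then 0%N else pdeg f1.

From mathcomp Require Import all_boot all_order all_algebra.
From mathcomp Require Import ring zify.
Import GRing.Theory.
Local Open Scope ring_scope.
Set Implicit Arguments. Unset Strict Implicit.

(* K[x] = U (+) W, where nonzero elements of U have degree not divisible by d
   and elements of W have degree divisible by d.  Since phi g lies in W,
   delta g and g have the same U-component g1.  If delta g = f~(w) lies in W,
   then g1 = 0, so g = h(w) and f~(w) = (delta h)(w), whence f~ = delta h by
   injectivity of composition with w.  Otherwise g1 <> 0, its degree is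
   positive and at most deg g, and deg (delta g) = d deg g. *)

Lemma size_sub_lt (R : nzRingType) (p q : {poly R}) :
  p != 0 -> size q = size p -> lead_coef q = lead_coef p ->
  (size (p - q)%R < size p)%N.
Proof.
move=> p0 sq lq; rewrite [X in (_ < X)%N](polySpred p0) ltnS.
apply/leq_sizeP => j; rewrite leq_eqVlt => /predU1P [<- | ltj].
  have qE : q`_(size p).-1 = lead_coef q by rewrite lead_coefE sq.
  by rewrite coefB qE lq; apply: subrr.
have le_pj : (size p <= j)%N by rewrite (polySpred p0).
by rewrite coefB !nth_default ?sq ?subr0.
Qed.

Lemma pdeg_lt_size (K : fieldType) (p q : {poly K}) :
  (pdeg p < pdeg q)%N -> (size p < size q)%N.
Proof. by rewrite /pdeg; lia. Qed.

Lemma pdeg_comp (K : fieldType) (p q : {poly K}) :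
  pdeg (p \Po q) = (pdeg p * pdeg q)%N.
Proof. exact: size_comp_poly. Qed.

Section Decomposition.

Variables (K : fieldType) (w : {poly K}).
Local Notation d := (pdeg w).

Lemma in_U0 : in_U w 0.
Proof. by move=> i _; rewrite coef0. Qed.

Lemma in_UD (u v : {poly K}) : in_U w u -> in_U w v -> in_U w (u + v).
Proof. by move=> hu hv i di; rewrite coefD hu // hv // addr0. Qed.

Lemma in_UB (u v : {poly K}) : in_U w u -> in_U w v -> in_U w (u - v).
Proof. by move=> hu hv i di; rewrite coefB hu // hv // subr0. Qed.

Lemma in_W0 : in_W w 0.
Proof. by exists 0; rewrite comp_poly0. Qed.

Lemma in_WD (u v : {poly K}) : in_W w u -> in_W w v -> in_W w (u + v).
Proof. by move=> [p ->] [q ->]; exists (p + q); rewrite comp_polyD. Qed.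

Lemma in_WB (u v : {poly K}) : in_W w u -> in_W w v -> in_W w (u - v).
Proof. by move=> [p ->] [q ->]; exists (p - q); rewrite comp_polyB. Qed.

Lemma in_U_pdeg_ndvd (u : {poly K}) : in_U w u -> u != 0 -> ~~ (d %| pdeg u)%N.
Proof.
move=> hu u0; apply: contra u0 => /hu.
by rewrite /pdeg -lead_coefE => /eqP; rewrite lead_coef_eq0.
Qed.

Lemma in_W_pdeg_dvd (v : {poly K}) : in_W w v -> (d %| pdeg v)%N.
Proof. by move=> [p ->]; rewrite pdeg_comp dvdn_mull. Qed.

Lemma in_U_in_W_eq0 (u : {poly K}) : in_U w u -> in_W w u -> u = 0.
Proof.
move=> hu /in_W_pdeg_dvd du; apply/eqP; apply: contraTT du.
exact: in_U_pdeg_ndvd.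
Qed.

Lemma UW_component_unique (u1 v1 u2 v2 : {poly K}) :
  in_U w u1 -> in_W w v1 -> in_U w u2 -> in_W w v2 ->
  u1 + v1 = u2 + v2 -> u1 = u2.
Proof.
move=> hu1 hv1 hu2 hv2 e; apply/eqP; rewrite -subr_eq0; apply/eqP.
apply: in_U_in_W_eq0; first exact: in_UB.
have -> : u1 - u2 = v2 - v1 by rewrite -(addrK v1 u1) e; ring.
exact: in_WB.
Qed.

Lemma pdeg_U_le (u v : {poly K}) : in_U w u -> in_W w v -> (pdeg u <= pdeg (u + v)%R)%N.
Proof.
move=> hu hv; rewrite leqNgt; apply/negP => lt_uv.
have u0 : u != 0 by apply: contraTneq lt_uv => ->; rewrite /pdeg size_poly0.
have sv : size v = size u.
  rewrite -[v](addKr u) size_polyDl size_polyN //.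
  exact: pdeg_lt_size.
by move: (in_U_pdeg_ndvd hu u0); rewrite /pdeg -sv in_W_pdeg_dvd.
Qed.

Hypothesis w_nonconst : (1 < size w)%N.

Lemma comp_poly_inj : injective (comp_poly w).
Proof.
move=> p q e; apply/eqP; rewrite -subr_eq0 -(comp_poly_eq0 _ w_nonconst).
by rewrite comp_polyB e subrr.
Qed.

Lemma exists_UW_lead (g : {poly K}) : g != 0 ->
  exists q, [/\ in_U w q \/ in_W w q, size q = size g & lead_coef q = lead_coef g].
Proof.
move=> g0; have lw0 : lead_coef w != 0.
  by rewrite lead_coef_eq0 -size_poly_gt0 (ltn_trans _ w_nonconst).
have lg0 : lead_coef g != 0 by rewrite lead_coef_eq0.
have [dvd_dg | ndvd_dg] := boolP (d %| pdeg g)%N.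
  set k := (pdeg g %/ d)%N.
  set a := lead_coef g / lead_coef w ^+ k.
  have a0 : a != 0 by rewrite mulf_neq0 // invr_eq0 expf_neq0.
  have lq : lead_coef ((a *: 'X^k) \Po w) = lead_coef g.
    rewrite lead_coef_comp // lead_coefZ lead_coefXn mulr1.
    by rewrite size_scale // size_polyXn mulfVK // expf_neq0.
  exists ((a *: 'X^k) \Po w); split=> //; first by right; exists (a *: 'X^k).
  have q0 : (a *: 'X^k) \Po w != 0 by rewrite -lead_coef_eq0 lq.
  rewrite (polySpred q0) (polySpred g0) -/(pdeg _) -/(pdeg g) pdeg_comp.
  by rewrite /pdeg size_scale // size_polyXn divnK.
exists (lead_coef g *: 'X^(pdeg g)); split.
- left=> i di; rewrite coefZ coefXn.
  by case: eqP => [ei | _]; [move: ndvd_dg; rewrite -ei di | rewrite mulr0].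
- by rewrite size_scale // size_polyXn -polySpred.
- by rewrite lead_coefZ lead_coefXn mulr1.
Qed.

Lemma UW_decomposition (g : {poly K}) :
  exists g1 g2, [/\ in_U w g1, in_W w g2 & g = g1 + g2].
Proof.
have [n] := ubnP (size g); elim: n g => // n IH g /ltnSE sg.
have [-> | g0] := eqVneq g 0.
  by exists 0, 0; rewrite addr0; split; [exact: in_U0 | exact: in_W0 |].
have [q [qUW sq lq]] := exists_UW_lead g0.
have /IH [g1 [g2 [U1 W2 e]]] := leq_trans (size_sub_lt g0 sq lq) sg.
have -> : g = (g - q) + q by rewrite subrK.
case: qUW => [qU | qW]; [exists (g1 + q), g2 | exists g1, (g2 + q)].
  by rewrite e addrAC; split=> //; apply: in_UD.
by rewrite e addrA; split=> //; apply: in_WD.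
Qed.

Lemma in_Im_delta_comp (h : {poly K}) : in_Im_delta w (h \Po w) -> in_Im_delta w h.
Proof.
move=> [g eg]; have [g1 [_ [U1 [v ->] gE]]] := UW_decomposition g.
have g10 : g1 = 0.
  apply: in_U_in_W_eq0 => //; exists (h + g - v).
  by rewrite comp_polyB comp_polyD eg /delta /phi subrK gE addrK.
exists v; apply: comp_poly_inj.
by rewrite eg gE g10 add0r /delta /phi comp_polyB.
Qed.

End Decomposition.

Lemma pdeg_delta (K : fieldType) (w g : {poly K}) :
  (2 <= pdeg w)%N -> (0 < pdeg g)%N -> pdeg (delta w g) = (pdeg g * pdeg w)%N.
Proof.
move=> hd g_pos; have lt_g : (size g < size (g \Po w))%N.
  by apply: pdeg_lt_size; rewrite pdeg_comp ltn_Pmulr.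
by rewrite /delta /phi addrC /pdeg size_polyDl ?size_polyN //; apply: pdeg_comp.
Qed.

Theorem lemma3p10 (K : fieldType) (w : {poly K}) (hd : (2 <= pdeg w)%N)
  (f : {poly K}) (hf0 : f != 0) (hf : in_Im_delta w f) :
  (forall ft : {poly K}, f = ft \Po w -> in_Im_delta w ft) /\
  (~ in_W w f ->
     forall f1 f2 : {poly K}, in_U w f1 -> in_W w f2 -> f = f1 + f2 ->
       (pdeg w * ell_of f1 <= pdeg f)%N /\ (pdeg w <= pdeg w * ell_of f1)%N).
Proof.
have w_nonconst : (1 < size w)%N by move: hd; rewrite /pdeg; lia.
split=> [ft fE | fW f1 f2 U1 W2 fE12].
  by apply: in_Im_delta_comp => //; rewrite -fE.
have [g fE] := hf.
have [g1 [g2 [Ug1 Wg2 gE]]] := UW_decomposition w_nonconst g.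
have Wgw : in_W w (g \Po w) by exists g.
have f1E : f1 = g1.
  apply: (UW_component_unique U1 W2 Ug1 (in_WB Wg2 Wgw)).
  by rewrite -fE12 fE /delta /phi gE addrA.
have f10 : f1 != 0 by apply/eqP => f10; apply: fW; rewrite fE12 f10 add0r.
have f1_pos : (0 < pdeg f1)%N.
  by rewrite lt0n; apply: contraNneq (in_U_pdeg_ndvd U1 f10) => ->.
have le_f1g : (pdeg f1 <= pdeg g)%N by rewrite f1E gE (pdeg_U_le Ug1 Wg2).
rewrite /ell_of (negbTE f10) fE pdeg_delta // ?(leq_trans f1_pos le_f1g) //.
split; last by rewrite leq_pmulr.
by rewrite mulnC leq_mul2r le_f1g orbT.
Qed.
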